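(* Let $M_t$ be the true model and $M_j$ any model in the class. (i) If $\dim(M_j)<\dim(M_t)$ then $\delta^*(M_t,M_j)>0$. (ii) If $\dim(M_j)=\dim(M_t)$ then $\delta^*(M_t,M_j)=0$ if $M_j=M_t$ and $\delta^*(M_t,M_j)>0$ if $M_j\neq M_t$. (iii) If $\dim(M_j)>\dim(M_t)$ then $\delta^*(M_t,M_j)=0$ if $M_t$ is nested in $M_j$ and $\delta^*(M_t,M_j)>0$ otherwise.
   Context: Normal linear regression with $k$ potential regressors and $n$ observations; a model $M_j$ contains the intercept and a subset of $j$ regressors, and $\dim(M_j)=j$; $M_t$ is nested in $M_j$ if the regressors of $M_t$ are among those of $M_j$. The true model $M_t$ has sampling distribution $N_n(\mathbf{y}\mid\mathbf{X}_{t+1}\boldsymbol\beta_{t+1},\sigma_t^2\mathbf{I}_n)$ with slope vector $\boldsymbol\beta_t$, all of whose regression coefficients are nonzero. Let $\Sigma^{(n)}_{t+j}=\begin{pmatrix}S^{(n)}_{tt}&S^{(n)}_{tj}\\S^{(n)}_{jt}&S^{(n)}_{jj}\end{pmatrix}$ be the (sample) covariance matrix of the joint set of covariates of $M_t$ and $M_j$, with $S^{(n)}_{tt},S^{(n)}_{jj}$ positive definite, let $S^{(n)}_{t\cdot j}=S^{(n)}_{tt}-S^{(n)}_{tj}(S^{(n)}_{jj})^{-1}S^{(n)}_{jt}$ and $S_{t\cdot j}=\lim_n S^{(n)}_{t\cdot j}$; the limiting covariance matrix of covariates is assumed to exist, and for distinct covariates to be positive definite. The pseudo-distance is $\delta_n(M_t,M_j)=\frac{1}{2\sigma_t^2}\boldsymbol\beta_t'S^{(n)}_{t\cdot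 j}\boldsymbol\beta_t$ (equivalently $\frac{1}{2\sigma_t^2}\boldsymbol\beta_t'\frac{\mathbf{X}_t'(\mathbf{I}-\mathbf{H}_j)\mathbf{X}_t}{n}\boldsymbol\beta_t$, $\mathbf{H}_j$ the hat matrix of $M_j$), and $\delta^*(M_t,M_j)=\lim_{n\to\infty}\delta_n(M_t,M_j)$. *)

From HB Require Import structures.
From mathcomp Require Import all_boot all_order all_algebra.
From mathcomp Require Import all_classical all_reals all_analysis.
Unset Printing Implicit Defensive.
Import Order.TTheory GRing.Theory Num.Theory.
Import numFieldNormedType.Exports.
Local Open Scope ring_scope.
Local Open Scope classical_set_scope.

(* Covariates are indexed by 'I_k; a model M_j is the set J : {set 'I_k} of its
   regressors (the intercept is always present and does not enter the
   covariance of the covariates); dim(M_j) = #|J|. *)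

Definition posdef {R : realFieldType} {m : nat} (A : 'M[R]_m) : Prop :=
  A^T = A /\ forall v : 'rV[R]_m, v != 0 -> 0 < (v *m A *m v^T) 0 0.

Definition subm {R : nzRingType} {k : nat} (S : 'M[R]_k) (A B : {set 'I_k})
  : 'M[R]_(#|A|, #|B|) :=
  \matrix_(i < #|A|, j < #|B|) S (enum_val i) (enum_val j).

Definition schur {R : fieldType} {k : nat} (S : 'M[R]_k) (T J : {set 'I_k})
  : 'M[R]_#|T| :=
  subm S T T - subm S T J *m invmx (subm S J J) *m subm S J T.

(* delta_n(M_t, M_j) = 1/(2 sigma_t^2) beta_t' S^{(n)}_{t.j} beta_t,
   where Sn n is the covariance matrix of the k covariates at sample size n. *)
Definition delta_n {R : realType} {k : nat} (Sn : nat -> 'M[R]_k) (s2 : R)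
  (T J : {set 'I_k}) (b : 'rV[R]_#|T|) (n : nat) : R :=
  (2 * s2)^-1 * (b *m schur (Sn n) T J *m b^T) 0 0.

Definition delta_star {R : realType} {k : nat} (Sn : nat -> 'M[R]_k) (s2 : R)
  (T J : {set 'I_k}) (b : 'rV[R]_#|T|) : R :=
  lim (delta_n Sn s2 T J b @ \oo).

(* With x := b E_T - b S_TJ S_JJ^-1 E_J, where E_A selects the covariates of A,
   one has b S_{T.J} b' = x S x'.  As S is positive definite this form vanishes
   exactly when x = 0.  If T is a subset of J, projecting onto J reproduces b
   and x = 0; if some covariate of T is missing from J, its coordinate in x is
   the corresponding (nonzero) entry of b.  So delta^* is zero iff M_t is nested
   in M_j, and the three dimension cases only decide which of the two occurs.
   The limit itself exists because the Schur complement is a rational function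
   of the entries, continuous wherever S_JJ is invertible. *)

From HB Require Import structures.
From mathcomp Require Import all_boot all_order all_algebra.
From mathcomp Require Import all_classical all_reals all_analysis.
Import Order.TTheory GRing.Theory Num.Theory.
Import numFieldNormedType.Exports.
Local Open Scope ring_scope.
Local Open Scope classical_set_scope.

Section EntrywiseConvergence.
Context {R : numFieldType} {U : Type} (F : set_system U) {FF : Filter F}.

Definition mxcvg {m n : nat} (A : U -> 'M[R]_(m, n)) (L : 'M[R]_(m, n)) :=
  forall i j, A x i j @[x --> F] --> L i j.

Lemma cvg_sum (I : Type) (r : seq I) (P : pred I) (f : I -> U -> R) (l : I -> R) :
  (forall i, P i -> f i x @[x --> F] --> l i) ->
  \sum_(i <- r | P i) f i x @[x --> F] --> \sum_(i <- r | P i) l i.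
Proof. by apply: cvg_big; exact: add_continuous. Qed.

Lemma cvg_prod (I : Type) (r : seq I) (P : pred I) (f : I -> U -> R) (l : I -> R) :
  (forall i, P i -> f i x @[x --> F] --> l i) ->
  \prod_(i <- r | P i) f i x @[x --> F] --> \prod_(i <- r | P i) l i.
Proof. by apply: cvg_big; exact: mul_continuous. Qed.

Lemma mxcvg_cst m n (L : 'M[R]_(m, n)) : mxcvg (fun=> L) L.
Proof. by move=> i j; exact: cvg_cst. Qed.

Lemma mxcvg_mxsub m n m' n' (f : 'I_m' -> 'I_m) (g : 'I_n' -> 'I_n)
    (A : U -> 'M[R]_(m, n)) L :
  mxcvg A L -> mxcvg (fun x => mxsub f g (A x)) (mxsub f g L).
Proof. move=> AL i j /=; under eq_cvg do rewrite mxE; rewrite mxE; exact: AL. Qed.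

Lemma mxcvgB m n (A B : U -> 'M[R]_(m, n)) LA LB :
  mxcvg A LA -> mxcvg B LB -> mxcvg (fun x => A x - B x) (LA - LB).
Proof.
move=> HA HB i j /=; under eq_cvg do rewrite !mxE; rewrite !mxE; exact: cvgB.
Qed.

Lemma mxcvg_mul m n p (A : U -> 'M[R]_(m, n)) (B : U -> 'M[R]_(n, p)) LA LB :
  mxcvg A LA -> mxcvg B LB -> mxcvg (fun x => A x *m B x) (LA *m LB).
Proof.
move=> HA HB i j /=; under eq_cvg do rewrite mxE; rewrite mxE.
by apply: cvg_sum => l _; exact: cvgM.
Qed.

Lemma cvg_det n (A : U -> 'M[R]_n) L : mxcvg A L -> \det (A x) @[x --> F] --> \det L.
Proof.
move=> AL; apply: cvg_sum => s _; apply: cvgMl_tmp.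
by apply: cvg_prod => i _; exact: AL.
Qed.

Lemma mxcvg_adj n (A : U -> 'M[R]_n) L : mxcvg A L -> mxcvg (fun x => \adj (A x)) (\adj L).
Proof.
move=> AL i j /=; under eq_cvg do rewrite mxE; rewrite mxE.
apply: cvgMl_tmp; apply: cvg_det.
move=> a b /=; under eq_cvg do rewrite !mxE; rewrite !mxE; exact: AL.
Qed.

Lemma mxcvg_inv n (A : U -> 'M[R]_n) L :
  (forall x, A x \in unitmx) -> L \in unitmx ->
  mxcvg A L -> mxcvg (fun x => invmx (A x)) (invmx L).
Proof.
move=> AU LU AL i j /=; under eq_cvg do rewrite /invmx AU mxE; rewrite /invmx LU mxE.
apply: cvgM; last exact: mxcvg_adj.
by apply: cvgV; [rewrite -unitfE -unitmxE | exact: cvg_det].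
Qed.

End EntrywiseConvergence.

Section Selection.
Context {R : nzRingType} {k : nat}.

Definition selmx (A : {set 'I_k}) : 'M[R]_(#|A|, k) :=
  rowsub (enum_val : 'I_#|A| -> 'I_k) 1%:M.

Lemma mul_selmx_mx A p (M : 'M[R]_(k, p)) :
  selmx A *m M = rowsub (enum_val : 'I_#|A| -> 'I_k) M.
Proof. by rewrite mul_rowsub_mx mul1mx. Qed.

Lemma mulmx_tr_selmx A p (M : 'M[R]_(p, k)) :
  M *m (selmx A)^T = colsub (enum_val : 'I_#|A| -> 'I_k) M.
Proof. by rewrite trmx_mxsub trmx1 mulmx_colsub mulmx1. Qed.

Lemma subm_selmx (S : 'M[R]_k) A B : subm S A B = selmx A *m S *m (selmx B)^T.
Proof. by rewrite mulmx_tr_selmx mul_selmx_mx; apply/matrixP => i j; rewrite !mxE. Qed.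

Lemma mulmx_selmx_mem {A : {set 'I_k}} {x} (xA : x \in A) {p} (X : 'M[R]_(p, #|A|)) i :
  (X *m selmx A) i x = X i (enum_rank_in xA x).
Proof.
rewrite mxE (bigD1 (enum_rank_in xA x)) //= !mxE enum_rankK_in // eqxx mulr1.
rewrite big1 ?addr0 // => j nj; rewrite !mxE; case: eqP => [ex|]; last by rewrite mulr0.
by move: nj; rewrite -(enum_valK_in xA j) ex eqxx.
Qed.

Lemma mulmx_selmx_notin (A : {set 'I_k}) p (X : 'M[R]_(p, #|A|)) i x :
  x \notin A -> (X *m selmx A) i x = 0.
Proof.
move=> xA; rewrite mxE big1 // => j _; rewrite !mxE; case: eqP => [ex|]; last by rewrite mulr0.
by move: xA; rewrite -ex enum_valP.
Qed.

Lemma selmx_subset (T J : {set 'I_k}) :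
  T \subset J -> selmx T *m (selmx J)^T *m selmx J = selmx T.
Proof.
move=> TJ; apply/matrixP => i y; have [yJ|yJ] := boolP (y \in J).
  by rewrite (mulmx_selmx_mem yJ) mulmx_tr_selmx !mxE enum_rankK_in.
rewrite mulmx_selmx_notin // !mxE; case: eqP => // ey.
by move: yJ; rewrite -ey (fintype.subsetP TJ) ?enum_valP.
Qed.

End Selection.

Section PositiveDefinite.
Context {R : realFieldType}.

Lemma posdef_unitmx {n} {A : 'M[R]_n} : posdef A -> A \in unitmx.
Proof.
move=> [_ Apos]; rewrite unitmxE unitfE; apply/det0P => -[v v0 vA].
by have := Apos v v0; rewrite vA mul0mx mxE ltxx.
Qed.

Lemma posdef_subm {k} (S : 'M[R]_k) (A : {set 'I_k}) : posdef S -> posdef (subm S A A).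
Proof.
move=> [St Spos]; split; first by apply/matrixP => i j; rewrite !mxE -{1}St mxE.
move=> v /rV0Pn[i vi]; rewrite subm_selmx !mulmxA -mulmxA -trmx_mul.
apply: Spos; apply: contraNneq vi => /(congr1 (fun w : 'rV_k => w 0 (enum_val i))).
by rewrite (mulmx_selmx_mem (enum_valP i)) enum_valK_in mxE => ->.
Qed.

End PositiveDefinite.

Section SchurQuadraticForm.
Context {R : fieldType} {k : nat} (S : 'M[R]_k) (T J : {set 'I_k}) (b : 'rV[R]_#|T|).

Definition schur_residual : 'rV[R]_k :=
  b *m selmx T - b *m subm S T J *m invmx (subm S J J) *m selmx J.

Lemma schur_quadE : S^T = S -> subm S J J \in unitmx ->
  b *m schur S T J *m b^T = schur_residual *m S *m schur_residual^T.
Proof.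
move=> St SJu; rewrite /schur_residual /schur.
have invt : (invmx (subm S J J))^T = invmx (subm S J J).
  by rewrite trmx_inv !subm_selmx !trmx_mul trmxK St !mulmxA.
have invK : invmx (subm S J J) *m subm S J J = 1 by rewrite mulVmx.
move: invt invK; set M := invmx _; clearbody M => invt invK.
have cancelJ p (X : 'M[R]_(p, #|J|)) : X *m M *m selmx J *m S *m (selmx J)^T = X.
  by rewrite -!mulmxA (mulmxA (selmx J)) -subm_selmx invK mulmx1.
rewrite !subm_selmx; do 3! rewrite ?mulmxBl ?mulmxBr ?linearB /=.
by rewrite !trmx_mul !trmxK St invt !mulmxA cancelJ opprK addNr addr0.
Qed.

Lemma schur_residual_eq0 : T \subset J -> subm S J J \in unitmx -> schur_residual = 0.
Proof.
move=> TJ SJu; have STJ : subm S T J = selmx T *m (selmx J)^T *m subm S J J.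
  by rewrite !subm_selmx !mulmxA selmx_subset.
rewrite /schur_residual STJ -!mulmxA (mulmxA (subm S J J)) mulmxV // mul1mx.
by rewrite (mulmxA (selmx T)) selmx_subset // subrr.
Qed.

Lemma schur_residual_neq0 i (iT : i \in T) : i \notin J ->
  b 0 (enum_rank_in iT i) != 0 -> schur_residual != 0.
Proof.
move=> iJ bi; apply: contraNneq bi => /(congr1 (fun w : 'rV_k => w 0 i)).
by rewrite mxE [X in _ + X]mxE (mulmx_selmx_mem iT) mulmx_selmx_notin // subr0 mxE => ->.
Qed.

End SchurQuadraticForm.

Section SchurFormSign.
Context {R : realFieldType} {k : nat} (S : 'M[R]_k) (T J : {set 'I_k}) (b : 'rV[R]_#|T|).
Hypothesis S_posdef : posdef S.

Let SJ_unit : subm S J J \in unitmx := posdef_unitmx (posdef_subm S J S_posdef).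

Lemma schur_form_eq0 : T \subset J -> (b *m schur S T J *m b^T) 0 0 = 0.
Proof.
move=> TJ; rewrite schur_quadE ?S_posdef.1 //.
by rewrite schur_residual_eq0 // !mul0mx mxE.
Qed.

Lemma schur_form_gt0 : (forall i, b 0 i != 0) -> ~~ (T \subset J) ->
  0 < (b *m schur S T J *m b^T) 0 0.
Proof.
move=> b_neq0 /subsetPn[i iT iJ]; rewrite schur_quadE ?S_posdef.1 //.
by apply: S_posdef.2; exact: (@schur_residual_neq0 _ _ S T J b i iT).
Qed.

End SchurFormSign.

Lemma mxcvg_schur {R : numFieldType} {U : Type} (F : set_system U) {FF : Filter F}
    k (A : U -> 'M[R]_k) L (T J : {set 'I_k}) :
  (forall x, subm (A x) J J \in unitmx) -> subm L J J \in unitmx ->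
  mxcvg F A L -> mxcvg F (fun x => schur (A x) T J) (schur L T J).
Proof.
move=> AJu LJu AL; have subm_cvg B C : mxcvg F (fun x => subm (A x) B C) (subm L B C).
  exact: mxcvg_mxsub.
apply: mxcvgB => //; apply: mxcvg_mul => //.
by apply: mxcvg_mul => //; exact: mxcvg_inv.
Qed.

Lemma delta_n_cvg {R : realType} k (Sn : nat -> 'M[R]_k) S s2 (T J : {set 'I_k})
    (b : 'rV[R]_#|T|) :
  (forall n, subm (Sn n) J J \in unitmx) -> subm S J J \in unitmx ->
  mxcvg \oo Sn S ->
  delta_n Sn s2 T J b @ \oo --> (2 * s2)^-1 * (b *m schur S T J *m b^T) 0 0.
Proof.
move=> SnJu SJu SnS; apply: cvgMl_tmp.
have form_cvg : mxcvg \oo (fun n => b *m schur (Sn n) T J *m b^T) (b *m schur S T J *m b^T).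
  apply: mxcvg_mul; last exact: mxcvg_cst.
  by apply: mxcvg_mul; [exact: mxcvg_cst | exact: mxcvg_schur].
exact: form_cvg.
Qed.

Theorem lemma3 (R : realType) (k : nat)
  (Sn : nat -> 'M[R]_k) (S : 'M[R]_k)
  (Hlim : forall i j : 'I_k, (fun n => Sn n i j) @ \oo --> S i j)
  (HS : posdef S)
  (T : {set 'I_k}) (beta : 'rV[R]_#|T|) (s2 : R)
  (Hbeta : forall i, beta 0 i != 0) (Hs2 : 0 < s2)
  (J : {set 'I_k})
  (HSnT : forall n : nat, posdef (subm (Sn n) T T))
  (HSnJ : forall n : nat, posdef (subm (Sn n) J J)) :
  let conv := cvg (delta_n Sn s2 T J beta @ \oo) in
  let d := delta_star Sn s2 T J beta in
  [/\ (#|J| < #|T|)%N -> conv /\ 0 < d,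
      #|J| = #|T| ->
        (J = T -> conv /\ d = 0) /\ (J <> T -> conv /\ 0 < d)
    & (#|T| < #|J|)%N ->
        (T \subset J -> conv /\ d = 0) /\ (~~ (T \subset J) -> conv /\ 0 < d)].
Proof.
move=> conv d; set q := (beta *m schur S T J *m beta^T) 0 0.
have delta_cvg : delta_n Sn s2 T J beta @ \oo --> (2 * s2)^-1 * q.
  apply: delta_n_cvg Hlim => [n|]; first exact: posdef_unitmx.
  exact/posdef_unitmx/posdef_subm.
have convP : conv := cvgP _ delta_cvg.
have dE : d = (2 * s2)^-1 * q := cvg_lim (@Rhausdorff R) delta_cvg.
have c_gt0 : 0 < (2 * s2)^-1 by rewrite invr_gt0 mulr_gt0.
have d_eq0 : T \subset J -> conv /\ d = 0.
  by move=> TJ; split=> //; rewrite dE /q schur_form_eq0 ?mulr0.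
have d_gt0 : ~~ (T \subset J) -> conv /\ 0 < d.
  by move=> TJ; split=> //; rewrite dE mulr_gt0 ?schur_form_gt0.
split=> [JT | JT | TJ]; last by split.
- by apply: d_gt0; apply: contraTN JT => /subset_leq_card; rewrite -leqNgt.
- split=> [JeT | neqJT]; first by apply: d_eq0; rewrite JeT.
  apply: d_gt0; apply: contra_notN neqJT => TJ.
  by apply/esym/eqP; rewrite eqEcard TJ JT /=.
Qed.
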